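(* There is an absolute constant $C$ such that for all integers $m\ge 2$, $n\ge2$ and every $X\in\{0,1\}^{n\times n}$, if $(a_0,\dots,a_{\phi(m)-1})$ is the representation of $\mathrm{Per}_{\zeta_m}(X)$, then $$\max_{0\le i\le\phi(m)-1}\log|a_i|\le C\,(m^2\log m+n\log n)$$ (with the convention $\log 0=-\infty$).
   Context: For $z\in\mathbb{C}$ with $|z|=1$ and $X\in\mathbb{C}^{n\times n}$, the $z$-permanent is $\mathrm{Per}_z(X)=\sum_{\sigma\in S_n} z^{\ell(\sigma)}\prod_{i=1}^n X_{i,\sigma(i)}$, where $\ell(\sigma)$ is the inversion number of $\sigma$. $\zeta_m$ is a primitive $m$-th root of unity and $\phi$ is Euler's totient function. The representation of $\alpha\in\mathbb{Z}[\zeta_m]$ is the unique tuple of integers $(a_0,\dots,a_{\phi(m)-1})$ with $\alpha=\sum_{i=0}^{\phi(m)-1}a_i\zeta_m^i$ (equivalently, the remainder upon dividing an integer polynomial representing $\alpha$ by the $m$-th cyclotomic polynomial $\Phi_m$). *)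

From HB Require Import structures.
From mathcomp Require Import all_boot all_order all_algebra all_fingroup all_field.
From mathcomp Require Import all_classical all_reals all_analysis.
From mathcomp Require Import Rstruct Rstruct_topology.
Set Implicit Arguments. Unset Strict Implicit. Unset Printing Implicit Defensive.
Import Order.TTheory GRing.Theory Num.Theory.
Local Open Scope ring_scope.

Definition inv_num (n : nat) (s : 'S_n) : nat :=
  #|[set p : 'I_n * 'I_n | (p.1 < p.2)%N && (s p.2 < s p.1)%N]|.

Definition zperm (R : comRingType) (n : nat) (z : R) (X : 'M[R]_n) : R :=
  \sum_(s : 'S_n) z ^+ inv_num s * \prod_(i < n) X i (s i).

From HB Require Import structures.
From mathcomp Require Import all_boot all_order all_algebra all_fingroup all_field.
From mathcomp Require Import all_classical all_reals all_analysis.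
From mathcomp Require Import Rstruct Rstruct_topology.
From mathcomp Require Import zify lra.
Set Implicit Arguments. Unset Strict Implicit. Unset Printing Implicit Defensive.
Import Order.TTheory GRing.Theory Num.Theory.
Local Open Scope ring_scope.

(* Let z be a primitive m-th root of unity and d = phi(m).  Since the
   cyclotomic polynomial Phi_m is monic of degree d, every power z^k can be
   written as an integer combination of 1, z, ..., z^(d-1) by reducing X^k
   modulo Phi_m one degree at a time; each reduction step multiplies the size
   of the coefficients by at most 1 + A, where A bounds the coefficients of
   Phi_m, and A <= 2^m because Phi_m is a product of at most m factors X - w
   with |w| = 1.  As z^m = 1 only the exponents k < m are needed.
   Summing over the n! permutations gives an integer representation of
   Per_z(X) whose coefficients are at most n! (1 + 2^m)^m <= n^n m^(2m^2);
   it is THE representation because 1, z, ..., z^(d-1) are linearly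
   independent over Q (the minimal polynomial of z has degree d).  Taking
   logarithms yields the theorem with C = 2. *)

Lemma coef_prod_unit_factors_le (R : numDomainType) (I : Type) (s : seq I)
    (P : pred I) (u : I -> R) :
  (forall i, `|u i| = 1) ->
  forall j, `|(\prod_(i <- s | P i) ('X - (u i)%:P))`_j| <= 2 ^+ size s.
Proof.
move=> u_unit; elim: s => [|x s IHs] j.
  by rewrite big_nil coefC; case: (j == 0%N); rewrite ?normr1 ?normr0.
rewrite big_cons /= exprS; case: (P x); last first.
  by apply: le_trans (IHs j) _; rewrite ler_peMl ?exprn_ge0 ?ler1n.
rewrite mulrBl coefB coefXM mulrC coefMC.
apply: le_trans (ler_normB _ _) _; rewrite normrM u_unit mulr1 mulr_natl mulr2n.
apply: lerD; last exact: IHs.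
by case: (j == 0%N); [rewrite normr0 exprn_ge0 | exact: IHs].
Qed.

Lemma cyclotomic_coef_le (m : nat) : (0 < m)%N ->
  forall j, `|('Phi_m)`_j| <= 2 ^+ m :> int.
Proof.
move=> m_gt0 j; have [z prim_z] := C_prim_root_exists m_gt0.
have z_unit : `|z| = 1.
  apply/eqP; rewrite -(pexpr_eq1 m_gt0) ?normr_ge0 //.
  by rewrite -normrX (prim_expr_order prim_z) normr1.
suff : `|(('Phi_m)`_j)%:~R : algC| <= 2 ^+ m.
  by rewrite -(ler_int algC) intr_norm rmorphXn.
rewrite -coef_map (Cintr_Cyclotomic prim_z) /cyclotomic.
rewrite -[in 2 ^+ m](size_enum_ord m) enumT.
by apply: coef_prod_unit_factors_le => i; rewrite normrX z_unit expr1n.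
Qed.

(* One reduction step modulo a monic phi of degree d: multiply the remainder
   c by X and cancel the overflowing term c_(d-1) X^d using phi. *)
Definition shift_reduce (phi : {poly int}) (d : nat) (c : nat -> int) : nat -> int :=
  fun i => (if i is i'.+1 then c i' else 0) - c d.-1 * phi`_i.

Definition pow_mod (phi : {poly int}) (d k : nat) : nat -> int :=
  iter k (shift_reduce phi d) (fun i => (i == 0%N)%:R).

Lemma pow_mod_eval (R : comNzRingType) (phi : {poly int}) (d : nat) (z : R) :
  phi \is monic -> size phi = d.+1 -> root (map_poly intr phi) z ->
  forall k, \sum_(i < d) (pow_mod phi d k i)%:~R * z ^+ i = z ^+ k.
Proof.
move=> phi_monic size_phi root_z.
have lead_phi : phi`_d = 1 by move/monicP: phi_monic; rewrite lead_coefE size_phi.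
have phi_z : \sum_(i < d.+1) (phi`_i)%:~R * z ^+ i = 0.
  rewrite -[RHS](eqP root_z) (@horner_coef_wide _ d.+1); last first.
    by rewrite -size_phi; apply: size_poly.
  by apply: eq_bigr => i _; rewrite coef_map.
case: d size_phi lead_phi phi_z => [|d] _ lead_phi phi_z.
  by move: phi_z; rewrite big_ord1 lead_phi mulr1 => /eqP; rewrite oner_eq0.
have zd : \sum_(i < d.+1) (phi`_i)%:~R * z ^+ i = - z ^+ d.+1.
  by move: phi_z; rewrite big_ord_recr /= lead_phi mul1r => /eqP; rewrite addr_eq0 => /eqP.
elim=> [|k IHk].
  by rewrite big_ord_recl big1 ?addr0 ?mulr1 // => i _; rewrite mul0r.
rewrite exprS -IHk mulr_sumr /=; set c := pow_mod phi d.+1 k.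
transitivity (\sum_(i < d.+1) ((if (i : nat) is i'.+1 then c i' else 0)%:~R * z ^+ i)
   - (c d)%:~R * \sum_(i < d.+1) (phi`_i)%:~R * z ^+ i).
  rewrite mulr_sumr -sumrB; apply: eq_bigr => i _.
  by rewrite rmorphB rmorphM /= mulrBl mulrA.
rewrite zd big_ord_recl /= mul0r add0r (big_ord_recr d) /= mulrN opprK.
congr (_ + _); last by rewrite exprS mulrCA.
by apply: eq_bigr => i _; rewrite exprS mulrCA.
Qed.

Lemma pow_mod_le (phi : {poly int}) (d : nat) (A : int) :
  (forall j, `|phi`_j| <= A) -> forall k i, `|pow_mod phi d k i| <= (1 + A) ^+ k.
Proof.
move=> phi_le; have A_ge0 : 0 <= A by apply: le_trans (phi_le 0%N).
elim=> [|k IHk] i; first by rewrite expr0 /pow_mod /=; case: eqP; rewrite ?normr1.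
rewrite /pow_mod iterS -/(pow_mod phi d k) /shift_reduce.
rewrite exprS mulrDl mul1r; apply: le_trans (ler_normB _ _) _.
apply: lerD; first by case: i => [|i]; rewrite ?normr0 ?exprn_ge0 ?addr_ge0.
by rewrite normrM mulrC; apply: ler_pM.
Qed.

Lemma prim_root_powers_free (m : nat) (z : algC) : m.-primitive_root z ->
  forall u : 'I_(totient m) -> int,
  \sum_(i < totient m) (u i)%:~R * z ^+ i = 0 -> forall i, u i = 0.
Proof.
move=> prim_z u u_z; set d := totient m in u u_z *.
pose q : {poly rat} := \poly_(i < d) (if insub i is Some j then (u j)%:~R else 0).
have qE (j : 'I_d) : q`_j = (u j)%:~R by rewrite coef_poly ltn_ord valK.
have root_q : root (map_poly ratr q) z.
  rewrite /root (@horner_coef_wide _ d); last first.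
    by rewrite size_map_inj_poly ?rmorph0 ?size_poly //; apply: fmorph_inj.
  by apply/eqP; rewrite -[RHS]u_z; apply: eq_bigr => j _; rewrite coef_map /= qE ratr_int.
have [p [Dp _ p_dvd]] := minCpolyP z.
have size_p : size p = d.+1.
  rewrite -(size_map_inj_poly (@fmorph_inj _ _ (@ratr algC))) ?rmorph0 //.
  by rewrite -Dp (minCpoly_cyclotomic prim_z) size_cyclotomic.
have q0 : q = 0.
  have size_q : (size q <= d)%N by apply: size_poly.
  apply: contraTeq size_q => q_neq0; have := dvdp_leq q_neq0 (_ : p %| q).
  by rewrite size_p -ltnNge -p_dvd => ->.
by move=> i; apply/eqP; rewrite -(intr_eq0 rat) -qE q0 coef0.
Qed.

(* The integer coefficients of Per_z(Y) in the basis 1, z, ..., z^(phi(m)-1),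
   obtained by reducing each z^l(s) modulo Phi_m. *)
Definition zperm_coef (m n : nat) (Y : 'M[int]_n) (i : nat) : int :=
  \sum_(s : 'S_n) (\prod_(j < n) Y j (s j)) * pow_mod 'Phi_m (totient m) (inv_num s %% m) i.

Lemma zperm_coefE (m n : nat) (Y : 'M[int]_n) (z : algC) : m.-primitive_root z ->
  zperm z (map_mx intr Y) = \sum_(i < totient m) (zperm_coef m Y i)%:~R * z ^+ i.
Proof.
move=> prim_z.
have root_z : root (map_poly intr 'Phi_m) z.
  by rewrite (Cintr_Cyclotomic prim_z) root_cyclotomic.
have z_pow := pow_mod_eval (Cyclotomic_monic m) (size_Cyclotomic m) root_z.
transitivity (\sum_(s : 'S_n) (\prod_(j < n) Y j (s j))%:~R *
   \sum_(i < totient m) (pow_mod 'Phi_m (totient m) (inv_num s %% m) i)%:~R * z ^+ i).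
  apply: eq_bigr => s _; rewrite z_pow (prim_expr_mod prim_z) mulrC rmorph_prod.
  by congr (_ * _); apply: eq_bigr => j _; rewrite mxE.
under eq_bigr do rewrite mulr_sumr.
rewrite exchange_big; apply: eq_bigr => i _ /=.
rewrite rmorph_sum mulr_suml; apply: eq_bigr => s _.
by rewrite mulrA -rmorphM.
Qed.

Lemma zperm_coef_le (m n : nat) (Y : 'M[int]_n) : (0 < m)%N ->
  (forall i j, `|Y i j| <= 1) ->
  forall i, `|zperm_coef m Y i| <= (n`!)%:R * (1 + 2 ^+ m) ^+ m.
Proof.
move=> m_gt0 Y_le i; apply: le_trans (ler_norm_sum _ _ _) _.
rewrite -card_Sn -sumr_const mulr_suml; apply: ler_sum => s _.
rewrite normrM -[leRHS]mul1r; apply: ler_pM => //.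
  by rewrite normr_prod; apply: prodr_ile1 => j _; rewrite normr_ge0 Y_le.
rewrite mul1r; apply: le_trans (pow_mod_le _ (cyclotomic_coef_le m_gt0) _ _) _.
by rewrite ler_weXn2l ?lerDl ?exprn_ge0 // ltnW // ltn_pmod.
Qed.

Lemma fact_leq_expn (n : nat) : (n`! <= n ^ n)%N.
Proof.
elim: n => [//|n IHn]; rewrite factS expnS leq_mul2l /=.
by apply: leq_trans IHn _; case: n => [//|n]; rewrite leq_exp2r.
Qed.

Lemma coef_bound_leq (m n : nat) : (2 <= m)%N ->
  (n`! * (1 + 2 ^ m) ^ m <= n ^ n * m ^ (2 * m ^ 2))%N.
Proof.
move=> m_ge2; apply: leq_mul; first exact: fact_leq_expn.
apply: (@leq_trans ((2 ^ m.+1) ^ m)).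
  by rewrite leq_exp2r ?expnS; have := expn_gt0 2 m; lia.
rewrite -expnM; apply: (@leq_trans (2 ^ (2 * m ^ 2))).
  by apply: leq_pexp2l => //; nia.
by rewrite leq_exp2r //; nia.
Qed.

Lemma ln_int_le (a : int) (m n : nat) : (0 < m)%N -> (0 < n)%N -> a != 0 ->
  `|a| <= (n ^ n * m ^ (2 * m ^ 2))%:R ->
  ln `|a%:~R : Rdefinitions.R| <= 2 * ((m ^ 2)%:R * ln m%:R + n%:R * ln n%:R).
Proof.
move=> m_gt0 n_gt0 a_neq0 a_le.
have a_gt0 : 0 < `|a%:~R : Rdefinitions.R| by rewrite normr_gt0 intr_eq0.
have lnm_ge0 : 0 <= ln (m%:R : Rdefinitions.R) by rewrite ln_ge0 ?ler1n.
have lnn_ge0 : 0 <= ln (n%:R : Rdefinitions.R) by rewrite ln_ge0 ?ler1n.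
have a_le_R : `|a%:~R : Rdefinitions.R| <= (n ^ n * m ^ (2 * m ^ 2))%:R.
  by rewrite -intr_norm -[_%:R](rmorph_nat (intr : int -> Rdefinitions.R)) ler_int.
have : ln `|a%:~R : Rdefinitions.R| <= ln (n ^ n * m ^ (2 * m ^ 2))%:R.
  by rewrite ler_ln ?posrE // (lt_le_trans a_gt0 a_le_R).
rewrite natrM !natrX lnM ?posrE ?exprn_gt0 ?ltr0n // !lnXn ?ltr0n //.
rewrite -[_ *+ n]mulr_natr -[_ *+ (2 * _)]mulr_natr natrM.
have := mulr_ge0 lnn_ge0 (ler0n _ n); have := mulr_ge0 lnm_ge0 (ler0n _ (m ^ 2)).
nra.
Qed.

Theorem mainTheorem7 :
  exists C : Rdefinitions.R,
  forall (m n : nat), (2 <= m)%N -> (2 <= n)%N ->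
  forall X : 'M[algC]_n, (forall i j, X i j = 0 \/ X i j = 1) ->
  forall z : algC, m.-primitive_root z ->
  forall a : 'I_(totient m) -> int,
    zperm z X = \sum_(i < totient m) (a i)%:~R * z ^+ i ->
  forall i : 'I_(totient m), a i != 0 ->
    ln `|(a i)%:~R : Rdefinitions.R|
      <= C * ((m ^ 2)%:R * ln (m%:R) + n%:R * ln (n%:R)).
Proof.
exists 2 => m n m_ge2 n_ge2 X X01 z prim_z a a_rep i ai_neq0.
have m_gt0 : (0 < m)%N by apply: ltnW.
pose Y : 'M[int]_n := \matrix_(i, j) (X i j != 0)%:R.
have XY : X = map_mx intr Y.
  by apply/matrixP => k l; rewrite !mxE; case: (X01 k l) => ->; rewrite ?eqxx ?oner_eq0.
have Y_le k l : `|Y k l| <= 1 by rewrite mxE; case: (_ != 0).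
have a_coef k : a k = zperm_coef m Y k.
  apply/eqP; rewrite -subr_eq0; apply/eqP; move: k.
  apply: (prim_root_powers_free prim_z).
  under eq_bigr do rewrite rmorphB mulrBl.
  by rewrite sumrB -a_rep -zperm_coefE // XY subrr.
apply: ln_int_le => //; first exact: ltnW.
rewrite a_coef; apply: le_trans (zperm_coef_le m_gt0 Y_le i) _.
have -> : (n`!)%:R * (1 + 2 ^+ m) ^+ m = (n`! * (1 + 2 ^ m) ^ m)%N%:R :> int.
  by rewrite natrM natrX natrD natrX.
by rewrite ler_nat coef_bound_leq.
Qed.
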